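(* Let $G$ be a finitely generated group and $\mathcal H$ a collection of subgroups forming a tight algebraic network inside $G$, and let $G_1$ be the finite-index subgroup of $G$ generated by the subgroups in $\mathcal H$. Then (with respect to a word metric) $G$ is a $(\tau,\eta)$-tight network, for some $\tau,\eta\ge0$, with respect to the collection of left cosets $\mathcal L=\{gH: g\in G_1,\ H\in\mathcal H\}$.
   Context: $G$ carries a word metric for a finite generating set. $\mathcal N_R(A)$ is the open $R$-neighborhood, $B(x,R)$ the open ball. A $(\lambda,\kappa)$-quasi-geodesic is a map $q$ from a connected subset of $\mathbb R$ with $\frac1\lambda|s-t|-\kappa\le\mathrm{dist}(q(s),q(t))\le\lambda|s-t|+\kappa$. A subset $A$ is $(C,L)$-quasi-convex if any two of its points are joined by an $(L,L)$-quasi-geodesic in $\mathcal N_C(A)$, and $M$-quasi-convex means $(M,M)$-quasi-convex; $A$ is $C$-path connected if any two of its points are joined by a path in $\mathcal N_C(A)$. Tight algebraic network: $G$ is an $M$-tight algebraic network with respect to $\mathcal H$ (and $\mathcal H$ forms a tight algebraic network inside $G$ if this holds for some $M$) if $\mathcal H$ is a collection of $M$-quasi-convex subgroups whose union generates a finite-index subgroup of $G$, and for any $H,H'\in\mathcal H$ there is a finite sequence $H=H_1,\dots,H_k=H'$ in $\mathcal H$ with each $H_i\cap H_{i+1}$ infinite and $M$-path connected. Tight network: a metric space $X$ is a $(\tau,\eta)$-tight network with respect to $\mathcal L$ if each $L\in\mathcal L$ is $(\tau,\eta)$-quasi-convex, $X=\bigcup_{L\in\mathcal L}\mathcal N_\tau(L)$,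 and for any $L,L'\in\mathcal L$ and any $x$ with $B(x,3\tau)$ meeting both $L$ and $L'$ there is a sequence $L=L_1,\dots,L_k=L'$ in $\mathcal L$, $k\le\eta$, with each $\mathcal N_\tau(L_i)\cap\mathcal N_\tau(L_{i+1})$ of infinite diameter, $\eta$-path connected and meeting $B(x,\eta)$. *)

From Stdlib Require Import Reals Lra List ClassicalEpsilon.
Open Scope R_scope.

Record Group := {
  carrier :> Type;
  gmul : carrier -> carrier -> carrier;
  ginv : carrier -> carrier;
  gone : carrier;
  gmulA : forall x y z, gmul x (gmul y z) = gmul (gmul x y) z;
  gmul1l : forall x, gmul gone x = x;
  gmul1r : forall x, gmul x gone = x;
  gmulVl : forall x, gmul (ginv x) x = gone;
  gmulVr : forall x, gmul x (ginv x) = gone }.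

Arguments gmul {_}.
Arguments ginv {_}.
Arguments gone {_}.

Section Defs.
Variable G : Group.

Definition wprod (w : list G) : G := fold_right gmul gone w.

Definition word_over (U : G -> Prop) (w : list G) : Prop :=
  Forall (fun s => U s \/ U (ginv s)) w.

Definition gen (U : G -> Prop) (g : G) : Prop :=
  exists w, word_over U w /\ wprod w = g.

Definition is_subgroup (H : G -> Prop) : Prop :=
  H gone /\ (forall x y, H x -> H y -> H (gmul x y)) /\ (forall x, H x -> H (ginv x)).

Definition generates (Sg : list G) : Prop := forall g, gen (fun s => In s Sg) g.

Definition has_len (Sg : list G) (g : G) (n : nat) : Prop :=
  exists w, word_over (fun s => In s Sg) w /\ length w = n /\ wprod w = g.

(** Word length: the least such n (meaningful when S generates G). *)
Definition word_len (Sg : list G) (g : G) : nat :=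
  epsilon (inhabits 0%nat)
    (fun n => has_len Sg g n /\ forall m, has_len Sg g m -> (n <= m)%nat).

Definition dist (Sg : list G) (x y : G) : R := INR (word_len Sg (gmul (ginv x) y)).

Definition nbhd (Sg : list G) (r : R) (A : G -> Prop) (x : G) : Prop :=
  exists a, A a /\ dist Sg x a < r.
Definition ball (Sg : list G) (x : G) (r : R) (y : G) : Prop := dist Sg x y < r.

Definition quasi_geodesic (Sg : list G) (lam kap : R) (a b : R) (q : R -> G) : Prop :=
  a <= b /\
  forall s t, a <= s <= b -> a <= t <= b ->
    / lam * Rabs (s - t) - kap <= dist Sg (q s) (q t) <= lam * Rabs (s - t) + kap.

Definition quasi_convex (Sg : list G) (C L : R) (A : G -> Prop) : Prop :=
  forall x y, A x -> A y ->
    exists a b q, quasi_geodesic Sg L L a b q /\ q a = x /\ q b = y /\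
      forall t, a <= t <= b -> nbhd Sg C A (q t).

(** A path (in the Cayley graph) from x to y inside B: vertices p 0 .. p n,
    consecutive ones at distance at most 1. *)
Definition path_in (Sg : list G) (B : G -> Prop) (x y : G) : Prop :=
  exists (n : nat) (p : nat -> G), p 0%nat = x /\ p n = y /\
    (forall i, (i < n)%nat -> dist Sg (p i) (p (S i)) <= 1) /\
    (forall i, (i <= n)%nat -> B (p i)).

Definition path_connected (Sg : list G) (C : R) (A : G -> Prop) : Prop :=
  forall x y, A x -> A y -> path_in Sg (nbhd Sg C A) x y.

Definition finite_set (A : G -> Prop) : Prop :=
  exists l : list G, forall x, A x -> In x l.

Definition infinite_diam (Sg : list G) (A : G -> Prop) : Prop :=
  forall r : R, exists x y, A x /\ A y /\ r < dist Sg x y.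

Definition inter (A B : G -> Prop) (x : G) : Prop := A x /\ B x.

Definition finite_index (K : G -> Prop) : Prop :=
  exists T : list G, forall g, exists t k, In t T /\ K k /\ g = gmul t k.

Definition gen_union (Hs : (G -> Prop) -> Prop) : G -> Prop :=
  gen (fun x => exists H, Hs H /\ H x).

Definition tight_alg_network (Sg : list G) (M : R) (Hs : (G -> Prop) -> Prop) : Prop :=
  (forall H, Hs H -> is_subgroup H /\ quasi_convex Sg M M H) /\
  finite_index (gen_union Hs) /\
  (forall H H', Hs H -> Hs H' ->
     exists (k : nat) (Hi : nat -> (G -> Prop)),
       (1 <= k)%nat /\ Hi 0%nat = H /\ Hi (k - 1)%nat = H' /\
       (forall i, (i < k)%nat -> Hs (Hi i)) /\
       (forall i, (i + 1 < k)%nat ->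
          ~ finite_set (inter (Hi i) (Hi (S i))) /\
          path_connected Sg M (inter (Hi i) (Hi (S i))))).

Definition tight_network (Sg : list G) (tau eta : R) (Ls : (G -> Prop) -> Prop) : Prop :=
  (forall L, Ls L -> quasi_convex Sg tau eta L) /\
  (forall x : G, exists L, Ls L /\ nbhd Sg tau L x) /\
  (forall L L' x, Ls L -> Ls L' ->
     (exists y, ball Sg x (3 * tau) y /\ L y) ->
     (exists y, ball Sg x (3 * tau) y /\ L' y) ->
     exists (k : nat) (Li : nat -> (G -> Prop)),
       (1 <= k)%nat /\ INR k <= eta /\ Li 0%nat = L /\ Li (k - 1)%nat = L' /\
       (forall i, (i < k)%nat -> Ls (Li i)) /\
       (forall i, (i + 1 < k)%nat ->
          let I := inter (nbhd Sg tau (Li i)) (nbhd Sg tau (Li (S i))) in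
          infinite_diam Sg I /\ path_connected Sg eta I /\
          exists y, I y /\ ball Sg x eta y)).

Definition coset (g : G) (H : G -> Prop) (y : G) : Prop :=
  exists h, H h /\ y = gmul g h.

Definition coset_family (G1 : G -> Prop) (Hs : (G -> Prop) -> Prop)
  (L : G -> Prop) : Prop :=
  exists g H, G1 g /\ Hs H /\ L = coset g H.

End Defs.

(* Left translation is an isometry, so every coset gH inherits the quasi-convexity
   of H, and finitely many cosets of one H0 cover G since G1 has finite index.
   An M-quasi-convex subgroup is generated by its elements of length < 4M, so there
   are only finitely many of them: the algebraic chains between members of Hs and the
   constants with N_tau(A) ∩ N_tau(B) ⊆ N_R(A ∩ B) can be bounded uniformly.
   For cosets yH, y'H' meeting B(x, 3 tau), write y^-1 y' in G1 as a word of bounded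
   length in the subgroups of Hs and walk along it, translating an algebraic chain
   by each prefix p: the translate p(A ∩ B) of an infinite, M-path-connected
   intersection is an infinite, connected core of N_tau(pA) ∩ N_tau(pB) close to x. *)

From Pilot Require Import Defs.
From Stdlib Require Import Reals Lra Lia List Wf_nat ClassicalEpsilon Classical
  FunctionalExtensionality PropExtensionality.
Open Scope R_scope.

Lemma least_nat (P : nat -> Prop) :
  (exists n, P n) -> exists n, P n /\ forall m, P m -> (n <= m)%nat.
Proof.
  intros hP.
  destruct (dec_inh_nat_subset_has_unique_least_element P (fun n => classic (P n)) hP)
    as [n [hn _]].
  exists n; exact hn.
Qed.

Lemma uniform_bound {A : Type} (Q : A -> Prop) (P : A -> nat -> Prop) (l : list A) :
  (forall a, Q a -> In a l) -> (forall a, Q a -> exists n, P a n) ->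
  exists N, forall a, Q a -> exists n, (n <= N)%nat /\ P a n.
Proof.
  revert Q; induction l as [|a0 l IH]; intros Q hl hP.
  - exists 0%nat; intros a ha; destruct (hl a ha).
  - destruct (IH (fun a => Q a /\ a <> a0)) as [N hN].
    + intros a [ha ne]; destruct (hl a ha); [congruence | assumption].
    + intros a [ha _]; exact (hP a ha).
    + destruct (classic (Q a0)) as [q0 | nq0].
      * destruct (hP a0 q0) as [n0 hn0].
        exists (max n0 N); intros a ha.
        destruct (classic (a = a0)) as [-> | ne].
        -- exists n0; split; [lia | exact hn0].
        -- destruct (hN a (conj ha ne)) as [n [hn hPn]]; exists n; split; [lia | exact hPn].
      * exists N; intros a ha.
        apply hN; split; [exact ha | intros ->; contradiction].
Qed.

Lemma restrictions_finite {A : Type} (l : list A) :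
  exists PL : list (A -> Prop), forall P : A -> Prop,
    exists Q, In Q PL /\ forall z, In z l -> (P z <-> Q z).
Proof.
  induction l as [| a l [PL hPL]].
  - exists ((fun _ => False) :: nil); intros P; exists (fun _ => False).
    split; [left; reflexivity | intros z []].
  - exists (map (fun Q z => z = a \/ Q z) PL ++ map (fun Q z => z <> a /\ Q z) PL).
    intros P; destruct (hPL P) as [Q [hQ hz]].
    destruct (classic (P a)) as [pa | npa].
    + exists (fun z => z = a \/ Q z); split;
        [apply in_or_app; left; apply (in_map (fun Q z => _) PL Q), hQ |].
      intros z [-> | hzl]; [tauto |].
      destruct (classic (z = a)) as [-> | ne]; [tauto |]; specialize (hz z hzl); tauto.
    + exists (fun z => z <> a /\ Q z); split;
        [apply in_or_app; right; apply (in_map (fun Q z => _) PL Q), hQ |].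
      intros z [-> | hzl]; [tauto |].
      destruct (classic (z = a)) as [-> | ne]; [tauto |]; specialize (hz z hzl); tauto.
Qed.

Section Chains.
Context {T : Type}.
Variables (Ls : T -> Prop) (P : T -> T -> Prop).

Definition chain (k : nat) (L L' : T) : Prop :=
  exists Li : nat -> T, (1 <= k)%nat /\ Li 0%nat = L /\ Li (k - 1)%nat = L' /\
    (forall i, (i < k)%nat -> Ls (Li i)) /\
    (forall i, (i + 1 < k)%nat -> P (Li i) (Li (S i))).

Lemma chain_cat k1 k2 L L1 L' :
  chain k1 L L1 -> chain k2 L1 L' -> chain (k1 + k2 - 1) L L'.
Proof.
  intros [L1i [a1 [b1 [c1 [d1 e1]]]]] [L2i [a2 [b2 [c2 [d2 e2]]]]].
  exists (fun i => if Compare_dec.lt_dec i k1 then L1i i else L2i (i - (k1 - 1))%nat).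
  split; [lia | split; [| split; [| split]]].
  - destruct (Compare_dec.lt_dec 0 k1); [exact b1 | lia].
  - destruct (Compare_dec.lt_dec (k1 + k2 - 1 - 1) k1) as [hlt | hge].
    + replace (k1 + k2 - 1 - 1)%nat with (k1 - 1)%nat by lia.
      rewrite c1, <- b2, <- c2; f_equal; lia.
    + rewrite <- c2; f_equal; lia.
  - intros i hi; destruct (Compare_dec.lt_dec i k1); [apply d1 | apply d2]; lia.
  - intros i hi; destruct (Compare_dec.lt_dec i k1); destruct (Compare_dec.lt_dec (S i) k1).
    + apply e1; lia.
    + replace i with (k1 - 1)%nat by lia; rewrite c1, <- b2.
      replace (S (k1 - 1) - (k1 - 1))%nat with 1%nat by lia; apply e2; lia.
    + lia.
    + replace (S i - (k1 - 1))%nat with (S (i - (k1 - 1))) by lia; apply e2; lia.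
Qed.

End Chains.

Section GroupLaws.
Variable G : Group.
Implicit Types x y z : G.

Lemma mulKg x y : gmul (ginv x) (gmul x y) = y.
Proof. rewrite gmulA, gmulVl, gmul1l; reflexivity. Qed.

Lemma mulVKg x y : gmul x (gmul (ginv x) y) = y.
Proof. rewrite gmulA, gmulVr, gmul1l; reflexivity. Qed.

Lemma mulgK x y : gmul (gmul x y) (ginv y) = x.
Proof. rewrite <- gmulA, gmulVr, gmul1r; reflexivity. Qed.

Lemma invg_unique x y : gmul x y = gone -> y = ginv x.
Proof. intros e; rewrite <- (mulKg x y), e, gmul1r; reflexivity. Qed.

Lemma invgK x : ginv (ginv x) = x.
Proof. symmetry; apply invg_unique, gmulVl. Qed.

Lemma invMg x y : ginv (gmul x y) = gmul (ginv y) (ginv x).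
Proof.
  symmetry; apply invg_unique.
  rewrite gmulA, <- (gmulA _ x y), gmulVr, gmul1r, gmulVr; reflexivity.
Qed.

Lemma invg1 : ginv (@gone G) = gone.
Proof. symmetry; apply invg_unique, gmul1l. Qed.

Lemma wprod_app (w1 w2 : list G) : wprod G (w1 ++ w2) = gmul (wprod G w1) (wprod G w2).
Proof. induction w1 as [|s w1 IH]; simpl; [rewrite gmul1l | rewrite IH, gmulA]; reflexivity. Qed.

Lemma wprod_rev_inv (w : list G) : wprod G (rev (map ginv w)) = ginv (wprod G w).
Proof.
  induction w as [|s w IH]; simpl; [rewrite invg1; reflexivity |].
  rewrite wprod_app, IH; simpl; rewrite gmul1r, invMg; reflexivity.
Qed.

Lemma word_over_rev_inv (U : G -> Prop) (w : list G) :
  word_over G U w -> word_over G U (rev (map ginv w)).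
Proof.
  intros hw; apply Forall_rev, Forall_map.
  eapply Forall_impl; [| exact hw]; intros s [u | u]; [right; rewrite invgK | left]; exact u.
Qed.

Lemma gen_subgroup (U : G -> Prop) : is_subgroup G (gen G U).
Proof.
  split; [| split].
  - exists nil; split; [constructor | reflexivity].
  - intros x y [w1 [h1 <-]] [w2 [h2 <-]].
    exists (w1 ++ w2); split; [apply Forall_app; split; assumption | apply wprod_app].
  - intros x [w [hw <-]].
    exists (rev (map ginv w)); split; [apply word_over_rev_inv, hw | apply wprod_rev_inv].
Qed.

Lemma gen_incl (U : G -> Prop) x : U x -> gen G U x.
Proof.
  intros hx; exists (x :: nil); split; [constructor; [left; exact hx | constructor] |].
  simpl; apply gmul1r.
Qed.

Lemma gen_min (U H : G -> Prop) :
  is_subgroup G H -> (forall x, U x -> H x) -> forall x, gen G U x -> H x.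
Proof.
  intros [h1 [hM hV]] hU x [w [hw <-]].
  induction hw as [| s w [hs | hs] _ IH]; simpl; [exact h1 | |].
  - exact (hM _ _ (hU s hs) IH).
  - rewrite <- (invgK s); exact (hM _ _ (hV _ (hU _ hs)) IH).
Qed.

Lemma coset_rebase (H : G -> Prop) g h :
  is_subgroup G H -> H h -> coset G g H = coset G (gmul g h) H.
Proof.
  intros [_ [hM hV]] hh.
  apply functional_extensionality; intros y; apply propositional_extensionality; split.
  - intros [k [hk ->]]; exists (gmul (ginv h) k); split; [exact (hM _ _ (hV _ hh) hk) |].
    rewrite <- gmulA, mulVKg; reflexivity.
  - intros [k [hk ->]]; exists (gmul h k); split; [exact (hM _ _ hh hk) | symmetry; apply gmulA].
Qed.

End GroupLaws.

Section WordMetric.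
Variable G : Group.
Variable Sg : list G.
Hypothesis hgen : generates G Sg.
Implicit Types x y z g : G.

Local Notation len := (word_len G Sg).
Local Notation dist := (Defs.dist G Sg).

Lemma word_len_spec g : has_len G Sg g (len g) /\ forall m, has_len G Sg g m -> (len g <= m)%nat.
Proof.
  unfold word_len; apply epsilon_spec, least_nat.
  destruct (hgen g) as [w [hw e]]; exists (length w), w; auto.
Qed.

Lemma word_len_min g m : has_len G Sg g m -> (len g <= m)%nat.
Proof. apply word_len_spec. Qed.

Lemma word_len_mul x y : (len (gmul x y) <= len x + len y)%nat.
Proof.
  destruct (proj1 (word_len_spec x)) as [w1 [o1 [l1 e1]]].
  destruct (proj1 (word_len_spec y)) as [w2 [o2 [l2 e2]]].
  apply word_len_min; exists (w1 ++ w2); split; [apply Forall_app; split; assumption |].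
  rewrite length_app, wprod_app, e1, e2; split; [lia | reflexivity].
Qed.

Lemma word_len_inv_le x : (len (ginv x) <= len x)%nat.
Proof.
  destruct (proj1 (word_len_spec x)) as [w [o [l e]]].
  apply word_len_min; exists (rev (map ginv w)); split; [apply word_over_rev_inv, o |].
  rewrite length_rev, length_map, wprod_rev_inv, e; split; [lia | reflexivity].
Qed.

Lemma word_len_inv x : len (ginv x) = len x.
Proof.
  apply Nat.le_antisymm; [apply word_len_inv_le |].
  rewrite <- (invgK G x) at 1; apply word_len_inv_le.
Qed.

Lemma word_len_one : len gone = 0%nat.
Proof.
  enough (len gone <= 0)%nat by lia.
  apply word_len_min; exists nil; repeat split; constructor.
Qed.

Lemma word_len_letter s : In s Sg \/ In (ginv s) Sg -> (len s <= 1)%nat.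
Proof.
  intros hs; apply word_len_min; exists (s :: nil); repeat split.
  - constructor; [exact hs | constructor].
  - simpl; apply gmul1r.
Qed.

Lemma dist_ge0 x y : 0 <= dist x y.
Proof. apply pos_INR. Qed.

Lemma dist_refl x : dist x x = 0.
Proof. unfold Defs.dist; rewrite gmulVl, word_len_one; reflexivity. Qed.

Lemma dist_sym x y : dist x y = dist y x.
Proof. unfold Defs.dist; rewrite <- word_len_inv, invMg, invgK; reflexivity. Qed.

Lemma dist_triangle x y z : dist x z <= dist x y + dist y z.
Proof.
  unfold Defs.dist; rewrite <- plus_INR; apply le_INR.
  replace (gmul (ginv x) z) with (gmul (gmul (ginv x) y) (gmul (ginv y) z));
    [apply word_len_mul | rewrite <- gmulA, mulVKg; reflexivity].
Qed.

Lemma dist_mull p x y : dist (gmul p x) (gmul p y) = dist x y.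
Proof. unfold Defs.dist; rewrite invMg, <- gmulA, mulKg; reflexivity. Qed.

Lemma dist_mulr p s : dist p (gmul p s) = INR (len s).
Proof. unfold Defs.dist; rewrite mulKg; reflexivity. Qed.

Fixpoint words (k : nat) : list (list G) :=
  match k with
  | O => nil :: nil
  | S k => flat_map (fun a => map (cons a) (words k)) (Sg ++ map ginv Sg)
  end.

Lemma in_words w : word_over G (fun s => In s Sg) w -> In w (words (length w)).
Proof.
  induction 1 as [| s w hs _ IH]; simpl; [left; reflexivity |].
  apply in_flat_map; exists s; split; [| apply in_map, IH].
  apply in_or_app; destruct hs as [hs | hs]; [left; exact hs | right].
  rewrite <- (invgK G s); apply in_map, hs.
Qed.

Definition ball_enum (n : nat) : list G :=
  flat_map (fun k => map (wprod G) (words k)) (seq 0 (S n)).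

Lemma in_ball_enum g n : (len g <= n)%nat -> In g (ball_enum n).
Proof.
  intros hn; destruct (proj1 (word_len_spec g)) as [w [o [l e]]].
  apply in_flat_map; exists (len g); split; [apply in_seq; lia |].
  rewrite <- l, <- e; apply in_map, in_words, o.
Qed.

Lemma nbhd_mono r r' A x : r <= r' -> nbhd G Sg r A x -> nbhd G Sg r' A x.
Proof. intros hr [a [ha hd]]; exists a; split; [exact ha | lra]. Qed.

Lemma nbhd_coset r A p z : nbhd G Sg r (coset G p A) z <-> nbhd G Sg r A (gmul (ginv p) z).
Proof.
  split.
  - intros [a [[h [hA ->]] hd]]; exists h; split; [exact hA |].
    rewrite <- (dist_mull p), mulVKg; exact hd.
  - intros [a [hA hd]]; exists (gmul p a); split; [exists a; auto |].
    rewrite <- (dist_mull (ginv p)), mulKg; exact hd.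
Qed.

(* A word metric is proper: balls are finite. *)
Lemma infinite_diam_of_infinite (X : G -> Prop) :
  (exists x, X x) -> ~ finite_set G X -> infinite_diam G Sg X.
Proof.
  intros [x hx] hfin r; destruct (INR_unbounded r) as [n hn].
  destruct (classic (exists y, X y /\ ~ In (gmul (ginv x) y) (ball_enum n)))
    as [[y [hy hout]] | hin].
  - exists x, y; repeat split; [exact hx | exact hy |].
    assert (INR n < dist x y); [| lra].
    apply lt_INR; destruct (Nat.le_gt_cases (len (gmul (ginv x) y)) n) as [hle | hgt];
      [contradict hout; apply in_ball_enum, hle | exact hgt].
  - exfalso; apply hfin; exists (map (gmul x) (ball_enum n)); intros y hy.
    rewrite <- (mulVKg G x y); apply in_map.
    apply NNPP; intros hout; apply hin; eauto.
Qed.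


Inductive rchain (r : R) (B : G -> Prop) : G -> G -> Prop :=
| rchain_refl x : B x -> rchain r B x x
| rchain_step x z y : B x -> dist x z <= r -> rchain r B z y -> rchain r B x y.

Lemma path_in_rchain B x y : rchain 1 B x y -> path_in G Sg B x y.
Proof.
  induction 1 as [x hx | x z y hx hxz _ [n [p [h0 [hn [hs hb]]]]]].
  - exists 0%nat, (fun _ => x); repeat split; [intros i hi; lia | intros; exact hx].
  - exists (S n), (fun i => match i with O => x | S j => p j end); repeat split; [exact hn | |].
    + intros [| i] hi; [rewrite h0; exact hxz | apply hs; lia].
    + intros [| i] hi; [exact hx | apply hb; lia].
Qed.

Lemma rchain_path_in B x y : path_in G Sg B x y -> rchain 1 B x y.
Proof.
  intros [n [p [<- [<- [hs hb]]]]]; revert p hs hb.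
  induction n as [| n IH]; intros p hs hb; [apply rchain_refl, hb; lia |].
  apply rchain_step with (p 1%nat); [apply hb; lia | apply hs; lia |].
  apply (IH (fun i => p (S i))); intros i hi; [apply hs | apply hb]; lia.
Qed.

Lemma rchain_mono r r' (B B' : G -> Prop) x y :
  r <= r' -> (forall z, B z -> B' z) -> rchain r B x y -> rchain r' B' x y.
Proof.
  intros hr hB; induction 1 as [x hx | x z y hx hxz _ IH];
    [apply rchain_refl, hB, hx | apply rchain_step with z; [apply hB, hx | lra | exact IH]].
Qed.

Lemma rchain_trans r B x y z : rchain r B x y -> rchain r B y z -> rchain r B x z.
Proof.
  induction 1 as [x hx | x u y hx hxu _ IH]; intros h; [exact h |].
  apply rchain_step with u; [exact hx | exact hxu | exact (IH h)].
Qed.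

Lemma rchain_snoc r B x y z : rchain r B x y -> B z -> dist y z <= r -> rchain r B x z.
Proof.
  intros hxy hz hyz; apply rchain_trans with y; [exact hxy |].
  apply rchain_step with z; [| exact hyz | apply rchain_refl, hz].
  clear hyz; induction hxy; assumption.
Qed.

Lemma rchain_sym r B x y : rchain r B x y -> rchain r B y x.
Proof.
  induction 1 as [x hx | x z y hx hxz _ IH]; [apply rchain_refl, hx |].
  apply rchain_snoc with z; [exact IH | exact hx | rewrite dist_sym; exact hxz].
Qed.

Lemma rchain_mull r B p x y :
  rchain r B x y -> rchain r (fun z => B (gmul (ginv p) z)) (gmul p x) (gmul p y).
Proof.
  induction 1 as [x hx | x z y hx hxz _ IH]; [apply rchain_refl; rewrite mulKg; exact hx |].
  apply rchain_step with (gmul p z);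
    [rewrite mulKg; exact hx | rewrite dist_mull; exact hxz | exact IH].
Qed.

Lemma rchain_word x w : word_over G (fun s => In s Sg) w ->
  rchain 1 (fun v => dist x v <= INR (length w)) x (gmul x (wprod G w)).
Proof.
  intros hw; revert x; induction hw as [| s w hs _ IH]; intros x.
  - simpl; rewrite gmul1r; apply rchain_refl; rewrite dist_refl; lra.
  - change (length (s :: w)) with (S (length w)).
    change (wprod G (s :: w)) with (gmul s (wprod G w)).
    assert (hs1 : INR (len s) <= 1) by (apply (le_INR _ 1), word_len_letter, hs).
    apply rchain_step with (gmul x s).
    + rewrite dist_refl; apply pos_INR.
    + rewrite dist_mulr; exact hs1.
    + rewrite gmulA;
      apply rchain_mono with (r := 1) (B := fun v => dist (gmul x s) v <= INR (length w));
        [lra | | apply IH].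
      intros v hv; rewrite S_INR; pose proof (dist_triangle x (gmul x s) v) as ht.
      rewrite dist_mulr in ht; lra.
Qed.

Lemma rchain_geodesic x y : rchain 1 (fun v => dist x v <= dist x y) x y.
Proof.
  destruct (proj1 (word_len_spec (gmul (ginv x) y))) as [w [o [l e]]].
  replace (dist x y) with (INR (length w)) by (unfold Defs.dist; rewrite l; reflexivity).
  rewrite <- (mulVKg G x y), <- e; apply rchain_word, o.
Qed.

Lemma gen_of_rchain r (H : G -> Prop) (n : nat) x y :
  is_subgroup G H -> r < INR (S n) -> rchain r H x y -> H x ->
  gen G (fun z => H z /\ In z (ball_enum n)) (gmul (ginv x) y).
Proof.
  intros hH hr; induction 1 as [x hx | x z y hx hxz hzy IH]; intros _.
  - rewrite gmulVl; apply (gen_subgroup G).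
  - assert (hz : H z) by (clear IH; induction hzy; assumption).
    replace (gmul (ginv x) y) with (gmul (gmul (ginv x) z) (gmul (ginv z) y))
      by (rewrite <- gmulA, mulVKg; reflexivity).
    apply (gen_subgroup G); [apply gen_incl; split | exact (IH hz)].
    + destruct hH as [_ [hM hV]]; exact (hM _ _ (hV _ hx) hz).
    + apply in_ball_enum, Nat.lt_succ_r, INR_lt; fold (dist x z); lra.
Qed.

Lemma quasi_convex_pos C L A x : quasi_convex G Sg C L A -> A x -> 0 < C /\ 0 <= L.
Proof.
  intros hq hx; destruct (hq x x hx hx) as [a [b [q [[hab hqg] [_ [_ hn]]]]]].
  destruct (hn a) as [z [_ hd]]; [lra |].
  destruct (hqg a a) as [_ hL]; [lra | lra |].
  rewrite dist_refl, Rminus_diag, Rabs_R0, Rmult_0_r in hL.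
  pose proof (dist_ge0 (q a) z); lra.
Qed.

(* Sample the quasi-geodesic at N + 1 equally spaced times, N >= b - a, and
   replace each sample by a point of A within distance C. *)
Lemma quasi_convex_rchain C L A x y :
  quasi_convex G Sg C L A -> A x -> A y -> rchain (2 * C + 2 * L) A x y.
Proof.
  intros hq hx hy; destruct (quasi_convex_pos C L A x hq hx) as [hC hL].
  destruct (hq x y hx hy) as [a [b [q [[hab hqg] [ea [eb hn]]]]]].
  destruct (INR_unbounded (b - a)) as [N hN].
  assert (hNpos : 0 < INR (S N)) by apply lt_0_INR, Nat.lt_0_succ.
  set (d := (b - a) / INR (S N)).
  assert (hNd : INR (S N) * d = b - a) by (unfold d; field; lra).
  assert (hd : 0 <= d <= 1) by (rewrite S_INR in hNpos, hNd; split; nra).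
  set (t i := a + INR i * d).
  assert (ht : forall i, (i <= S N)%nat -> a <= t i <= b).
  { intros i hi; apply le_INR in hi; pose proof (pos_INR i); unfold t; nra. }
  assert (hsamples : forall i, (i <= S N)%nat ->
            exists h, A h /\ dist (q (t i)) h < C /\ rchain (2 * C + 2 * L) A x h).
  { induction i as [| i IH]; intros hi.
    - exists x; repeat split; [exact hx | | apply rchain_refl, hx].
      unfold t; rewrite Rmult_0_l, Rplus_0_r, ea, dist_refl; exact hC.
    - destruct IH as [h [hh [hdh hch]]]; [lia |].
      destruct (hn (t (S i)) (ht _ hi)) as [h' [hh' hdh']].
      exists h'; repeat split; [exact hh' | exact hdh' |].
      apply rchain_snoc with h; [exact hch | exact hh' |].
      destruct (hqg (t i) (t (S i)) (ht i ltac:(lia)) (ht _ hi)) as [_ hstep].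
      replace (Rabs (t i - t (S i))) with d in hstep
        by (unfold t; rewrite S_INR, <- Rabs_Ropp, Rabs_right; [ring | nra]).
      pose proof (dist_triangle h (q (t i)) h').
      pose proof (dist_triangle (q (t i)) (q (t (S i))) h').
      rewrite dist_sym in hdh; nra. }
  destruct (hsamples (S N) (Nat.le_refl _)) as [h [hh [hdh hch]]].
  replace (t (S N)) with b in hdh by (unfold t; lra); rewrite eb in hdh.
  apply rchain_snoc with h; [exact hch | exact hy | rewrite dist_sym; lra].
Qed.

Lemma quasi_convex_subgroup_gen M H (n : nat) :
  is_subgroup G H -> quasi_convex G Sg M M H -> 4 * M < INR (S n) ->
  forall y, H y -> gen G (fun z => H z /\ In z (ball_enum n)) y.
Proof.
  intros hH hq hn y hy; destruct hH as [h1 hMV].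
  rewrite <- (gmul1l G y), <- (invg1 G).
  apply gen_of_rchain with (2 * M + 2 * M); [split; assumption | lra | | exact h1].
  apply quasi_convex_rchain; assumption.
Qed.


Lemma quasi_convex_subgroups_finite M (Hs : (G -> Prop) -> Prop) :
  (forall H, Hs H -> is_subgroup G H /\ quasi_convex G Sg M M H) ->
  exists HL : list (G -> Prop), forall H, Hs H -> In H HL.
Proof.
  intros hHs; destruct (INR_unbounded (4 * M)) as [n hn].
  destruct (restrictions_finite (ball_enum n)) as [PL hPL].
  set (span Q := gen G (fun z => Q z /\ In z (ball_enum n))).
  exists (map span PL); intros H hH; destruct (hHs H hH) as [hsub hq].
  destruct (hPL H) as [Q [hQ hagree]].
  replace H with (span Q); [apply in_map, hQ |].
  apply functional_extensionality; intros y; apply propositional_extensionality; split.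
  - apply gen_min; [exact hsub |]; intros z [hz hin]; apply hagree; assumption.
  - intros hy; destruct (quasi_convex_subgroup_gen M H n hsub hq ltac:(rewrite S_INR; lra) y hy)
      as [w [hw e]].
    exists w; split; [| exact e].
    eapply Forall_impl; [| exact hw].
    intros s [[h1 h2] | [h1 h2]]; [left | right]; split; try apply hagree; assumption.
Qed.

Lemma nbhd_inter_subgroups (A B : G -> Prop) r :
  is_subgroup G A -> is_subgroup G B ->
  exists n : nat, forall z, nbhd G Sg r A z -> nbhd G Sg r B z ->
    nbhd G Sg (INR n) (inter G A B) z.
Proof.
  intros [_ [hAM hAV]] [_ [hBM hBV]].
  destruct (INR_unbounded (2 * r)) as [m hm].
  set (diff w := exists a b, A a /\ B b /\ gmul (ginv a) b = w).
  destruct (uniform_bound (fun w => In w (ball_enum m) /\ diff w)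
              (fun w n => exists a b, A a /\ B b /\ gmul (ginv a) b = w /\ (len a <= n)%nat)
              (ball_enum m)) as [N hN].
  { intros w [hw _]; exact hw. }
  { intros w [_ [a [b [ha [hb e]]]]]; exists (len a), a, b; auto. }
  exists (m + N)%nat; intros z [a [ha hza]] [b [hb hzb]].
  unfold Defs.dist in hza, hzb.
  set (u := gmul (ginv z) a) in *; set (v := gmul (ginv z) b) in *.
  assert (euv : gmul (ginv a) b = gmul (ginv u) v)
    by (unfold u, v; rewrite invMg, invgK, <- gmulA, mulVKg; reflexivity).
  assert (hlen : (len (gmul (ginv a) b) <= m)%nat).
  { rewrite euv; eapply Nat.le_trans; [apply word_len_mul |]; rewrite word_len_inv.
    apply Nat.lt_le_incl, INR_lt; rewrite plus_INR; lra. }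
  assert (hdiff : diff (gmul (ginv a) b)) by (exists a, b; auto).
  destruct (hN _ (conj (in_ball_enum _ _ hlen) hdiff))
    as [n [hnN [a' [b' [ha' [hb' [e' hla']]]]]]].
  assert (ec : gmul a (ginv a') = gmul b (ginv b')).
  { rewrite <- (mulVKg G a b), <- e', <- !gmulA, gmulVr, gmul1r; reflexivity. }
  exists (gmul a (ginv a')); split; [split; [| rewrite ec]; auto |].
  unfold Defs.dist; replace (gmul (ginv z) (gmul a (ginv a'))) with (gmul u (ginv a'))
    by (unfold u; symmetry; apply gmulA).
  apply lt_INR; eapply Nat.le_lt_trans; [apply word_len_mul |]; rewrite word_len_inv.
  apply INR_lt; rewrite !plus_INR; apply le_INR in hla'; apply le_INR in hnN;
    pose proof (pos_INR m); lra.
Qed.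


Lemma quasi_convex_mono C C' L L' A :
  C <= C' -> 0 < L -> L <= L' -> quasi_convex G Sg C L A -> quasi_convex G Sg C' L' A.
Proof.
  intros hC hL hL' hq x y hx hy.
  destruct (hq x y hx hy) as [a [b [q [[hab hqg] [ea [eb hn]]]]]].
  exists a, b, q; split; [split; [exact hab |] | split; [exact ea | split; [exact eb |]]].
  - intros s t hs ht; destruct (hqg s t hs ht) as [lo hi].
    assert (/ L' <= / L) by (apply Rinv_le_contravar; lra).
    pose proof (Rabs_pos (s - t)); split; nra.
  - intros t ht; apply nbhd_mono with C; [exact hC | exact (hn t ht)].
Qed.

Lemma quasi_convex_coset C L A g :
  quasi_convex G Sg C L A -> quasi_convex G Sg C L (coset G g A).
Proof.
  intros hq _ _ [a [ha ->]] [b [hb ->]].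
  destruct (hq a b ha hb) as [a0 [b0 [q [[hab hqg] [ea [eb hn]]]]]].
  exists a0, b0, (fun t => gmul g (q t)).
  split; [split; [exact hab |] |].
  2: split; [rewrite ea; reflexivity | split; [rewrite eb; reflexivity |]].
  - intros s t hs ht; rewrite dist_mull; apply hqg; assumption.
  - intros t ht; apply nbhd_coset; rewrite mulKg; exact (hn t ht).
Qed.

Lemma path_connected_translate r A p :
  path_connected G Sg r A -> path_connected G Sg r (fun z => A (gmul (ginv p) z)).
Proof.
  intros hpc x y hx hy; apply path_in_rchain.
  rewrite <- (mulVKg G p x), <- (mulVKg G p y).
  eapply rchain_mono; [apply Rle_refl | | apply rchain_mull, rchain_path_in, hpc; assumption].
  intros z [a [ha hd]]; exists (gmul p a); split; [rewrite mulKg; exact ha |].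
  rewrite <- (dist_mull (ginv p)), mulKg; exact hd.
Qed.

(* Join each point of I to a nearby point of the core C by a geodesic, then travel inside C. *)
Lemma path_connected_of_core r R0 eta (C I : G -> Prop) :
  (forall c, C c -> I c) -> (forall z, I z -> exists c, C c /\ dist z c < R0) ->
  path_connected G Sg r C -> r <= eta -> R0 <= eta -> path_connected G Sg eta I.
Proof.
  intros hCI hnear hpc hr hR z w hz hw; apply path_in_rchain.
  destruct (hnear z hz) as [c [hc hzc]]; destruct (hnear w hw) as [d [hd hwd]].
  assert (hgeo : forall v u, I v -> dist v u < R0 -> rchain 1 (nbhd G Sg eta I) v u).
  { intros v u hv hvu; eapply rchain_mono; [apply Rle_refl | | apply (rchain_geodesic v u)].
    intros y hy; exists v; split; [exact hv | rewrite dist_sym; lra]. }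
  apply rchain_trans with c; [apply hgeo; assumption |].
  apply rchain_trans with d; [| apply rchain_sym, hgeo; assumption].
  eapply rchain_mono; [apply Rle_refl | | apply rchain_path_in, hpc; assumption].
  intros v [e [he hve]]; exists e; split; [apply hCI, he | lra].
Qed.

Definition tight_link (tau eta : R) (x : G) (A B : G -> Prop) : Prop :=
  let I := inter G (nbhd G Sg tau A) (nbhd G Sg tau B) in
  infinite_diam G Sg I /\ path_connected G Sg eta I /\ exists y, I y /\ ball G Sg x eta y.

Lemma tight_network_intro tau eta (Ls : (G -> Prop) -> Prop) :
  (forall L, Ls L -> quasi_convex G Sg tau eta L) ->
  (forall x, exists L, Ls L /\ nbhd G Sg tau L x) ->
  (forall L L' x, Ls L -> Ls L' ->
     (exists y, ball G Sg x (3 * tau) y /\ L y) -> (exists y, ball G Sg x (3 * tau) y /\ L' y) ->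
     exists k, INR k <= eta /\ chain Ls (tight_link tau eta x) k L L') ->
  tight_network G Sg tau eta Ls.
Proof.
  intros hqc hcov hch; split; [exact hqc | split; [exact hcov |]].
  intros L L' x hL hL' hy hy'.
  destruct (hch L L' x hL hL' hy hy') as [k [hk [Li [h1 [h2 [h3 [h4 h5]]]]]]].
  exists k, Li; auto 6.
Qed.

(* The translated core p (A ∩ B) lies in both coset neighbourhoods and, up to the
   constant R0, fills their intersection. *)
Lemma tight_link_coset tau eta r R0 x p (A B : G -> Prop) :
  is_subgroup G A -> is_subgroup G B ->
  ~ finite_set G (inter G A B) -> path_connected G Sg r (inter G A B) ->
  (forall z, nbhd G Sg tau A z -> nbhd G Sg tau B z -> nbhd G Sg R0 (inter G A B) z) ->
  0 < tau -> r <= eta -> R0 <= eta -> dist x p < eta ->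
  tight_link tau eta x (coset G p A) (coset G p B).
Proof.
  intros [hA1 _] [hB1 _] hinf hpc hnear htau hr hR hxp.
  set (I := inter G (nbhd G Sg tau (coset G p A)) (nbhd G Sg tau (coset G p B))).
  set (core z := inter G A B (gmul (ginv p) z)).
  assert (hcore : forall c, core c -> I c).
  { intros c [ca cb]; split; apply nbhd_coset; eexists; split; [exact ca | | exact cb |];
      rewrite dist_refl; exact htau. }
  assert (hp : core p) by (unfold core; rewrite gmulVl; split; assumption).
  unfold tight_link; fold I; split; [| split].
  - intros s; destruct (infinite_diam_of_infinite core (ex_intro _ p hp)) with s
      as [z [w [hz [hw hd]]]].
    + intros [l hl]; apply hinf; exists (map (gmul (ginv p)) l); intros c hc.
      rewrite <- (mulKg G p c); apply in_map, hl; unfold core; rewrite mulKg; exact hc.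
    + exists z, w; auto.
  - apply path_connected_of_core with r R0 core;
      [exact hcore | | apply path_connected_translate, hpc | exact hr | exact hR].
    intros z [h1 h2]; apply nbhd_coset in h1, h2.
    destruct (hnear _ h1 h2) as [c [hc hd]]; exists (gmul p c); split.
    + unfold core; rewrite mulKg; exact hc.
    + rewrite <- (dist_mull (ginv p)), mulKg; exact hd.
  - exists p; split; [apply hcore, hp | exact hxp].
Qed.

End WordMetric.

Section TightNetwork.
Variable G : Group.
Variable Sg : list G.
Hypothesis hgen : generates G Sg.
Variable Hs : (G -> Prop) -> Prop.
Variable M : R.
Hypothesis hHs : forall H, Hs H -> is_subgroup G H /\ quasi_convex G Sg M M H.

Local Notation G1 := (gen_union G Hs).
Local Notation cosets := (coset_family G (gen_union G Hs) Hs).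
Local Notation len := (word_len G Sg).
Local Notation dist := (Defs.dist G Sg).

Definition algebraic_link (A B : G -> Prop) : Prop :=
  ~ finite_set G (inter G A B) /\ path_connected G Sg M (inter G A B).

Hypothesis hchain : forall H H', Hs H -> Hs H' -> exists k, chain Hs algebraic_link k H H'.

Definition word_cost (w : list G) : nat := list_sum (map len w).

Lemma gen_union_subgroup : is_subgroup G G1.
Proof. apply gen_subgroup. Qed.

Lemma gen_union_incl H z : Hs H -> H z -> G1 z.
Proof. intros hH hz; apply gen_incl; exists H; auto. Qed.

(* Only finitely many subgroups are M-quasi-convex, so constants attached to
   pairs of members of Hs can be chosen uniformly. *)
Lemma bounded_on_pairs (P : (G -> Prop) -> (G -> Prop) -> nat -> Prop) :
  (forall A B, Hs A -> Hs B -> exists n, P A B n) ->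
  exists N, forall A B, Hs A -> Hs B -> exists n, (n <= N)%nat /\ P A B n.
Proof.
  intros hP; destruct (quasi_convex_subgroups_finite G Sg hgen M Hs hHs) as [HL hHL].
  destruct (uniform_bound (fun AB => Hs (fst AB) /\ Hs (snd AB)) (fun AB => P (fst AB) (snd AB))
              (list_prod HL HL)) as [N hN].
  - intros [A B] [hA hB]; apply in_prod; auto.
  - intros [A B] [hA hB]; apply hP; assumption.
  - exists N; intros A B hA hB; exact (hN (A, B) (conj hA hB)).
Qed.

Lemma coset_links tau : 0 < tau ->
  exists (Nc : nat) (R0 : R), forall x p A B eta,
    G1 p -> Hs A -> Hs B -> M <= eta -> R0 <= eta -> dist x p < eta ->
    exists k, (k <= Nc)%nat /\
      chain cosets (tight_link G Sg tau eta x) k (coset G p A) (coset G p B).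
Proof.
  intros htau.
  destruct (bounded_on_pairs (fun A B k => chain Hs algebraic_link k A B)) as [Nc hNc];
    [exact hchain |].
  destruct (bounded_on_pairs (fun A B n => forall z,
              nbhd G Sg tau A z -> nbhd G Sg tau B z -> nbhd G Sg (INR n) (inter G A B) z))
    as [Rn hRn].
  { intros A B hA hB; apply nbhd_inter_subgroups; [exact hgen | apply hHs, hA | apply hHs, hB]. }
  exists Nc, (INR Rn); intros x p A B eta hp hA hB hM hR hxp.
  destruct (hNc A B hA hB) as [k [hk [Hi [k1 [e0 [ek [hHi hlinks]]]]]]].
  exists k; split; [exact hk |].
  exists (fun i => coset G p (Hi i)); split; [exact k1 |].
  split; [rewrite e0; reflexivity | split; [rewrite ek; reflexivity | split]].
  - intros i hi; exists p, (Hi i); auto.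
  - intros i hi; destruct (hlinks i hi) as [hinf hpc].
    assert (hA' : Hs (Hi i)) by (apply hHi; lia).
    assert (hB' : Hs (Hi (S i))) by (apply hHi; lia).
    destruct (hRn _ _ hA' hB') as [n [hn hnear]].
    apply tight_link_coset with M (INR n);
      [exact hgen | apply hHs, hA' | apply hHs, hB' | exact hinf | exact hpc | exact hnear
      | exact htau | exact hM | apply le_INR in hn; lra | exact hxp].
Qed.

(* Walking along a word s_1 ... s_m with s_j in K_j, insert at p s_1 ... s_{j-1} a
   translated chain from the current coset to the coset of K_j, which contains s_j. *)
Lemma chain_along_word Ls P x (Nc : nat) E :
  (forall p A B, G1 p -> Hs A -> Hs B -> dist x p < E ->
     exists k, (k <= Nc)%nat /\ chain Ls P k (coset G p A) (coset G p B)) ->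
  forall w p H H', Forall (fun s => exists K, Hs K /\ K s) w -> G1 p -> Hs H -> Hs H' ->
    dist x p + INR (word_cost w) < E ->
    exists k, (k <= (length w + 1) * Nc)%nat /\
      chain Ls P k (coset G p H) (coset G (gmul p (wprod G w)) H').
Proof.
  intros hbase w; induction w as [| s w IH]; intros p H H' hw hp hH hH' hd.
  - destruct (hbase p H H' hp hH hH') as [k [hk hc]]; [simpl in hd; lra |].
    exists k; split; [simpl; lia | simpl; rewrite gmul1r; exact hc].
  - inversion hw as [| ? ? [K [hK hKs]] hw']; subst.
    change (word_cost (s :: w)) with (len s + word_cost w)%nat in hd.
    rewrite plus_INR in hd; pose proof (pos_INR (word_cost w)).
    destruct (hbase p H K hp hH hK) as [k1 [hk1 hc1]]; [pose proof (pos_INR (len s)); lra |].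
    rewrite (coset_rebase G K p s (proj1 (hHs K hK)) hKs) in hc1.
    destruct (IH (gmul p s) K H' hw') as [k2 [hk2 hc2]];
      [apply gen_union_subgroup; [exact hp | exact (gen_union_incl K s hK hKs)]
      | exact hK | exact hH' | |].
    { pose proof (dist_triangle G Sg hgen x p (gmul p s)) as ht.
      rewrite (dist_mulr G Sg) in ht; lra. }
    exists (k1 + k2 - 1)%nat; split; [simpl length; nia |].
    change (wprod G (s :: w)) with (gmul s (wprod G w)); rewrite gmulA.
    apply chain_cat with (coset G (gmul p s) K); assumption.
Qed.

Lemma words_bounded (n : nat) : exists W, forall u, G1 u -> (len u <= n)%nat ->
  exists w, Forall (fun s => exists K, Hs K /\ K s) w /\ wprod G w = u /\
    (word_cost w <= W)%nat /\ (length w <= W)%nat.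
Proof.
  destruct (uniform_bound (fun u => G1 u /\ (len u <= n)%nat)
              (fun u W => exists w, Forall (fun s => exists K, Hs K /\ K s) w /\ wprod G w = u /\
                 (word_cost w <= W)%nat /\ (length w <= W)%nat) (ball_enum G Sg n)) as [N hN].
  - intros u [_ hu]; exact (in_ball_enum G Sg hgen u n hu).
  - intros u [[w [hw e]] _]; exists (word_cost w + length w)%nat, w.
    split; [| split; [exact e | lia]].
    eapply Forall_impl; [| exact hw].
    intros s [[K [hK hs]] | [K [hK hs]]]; exists K; split; [exact hK | exact hs | exact hK |].
    rewrite <- (invgK G s); apply hHs; assumption.
  - exists N; intros u hu hlen.
    destruct (hN u (conj hu hlen)) as [m [hm [w [hw [e [hc hl]]]]]].
    exists w; repeat split; [exact hw | exact e | lia | lia].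
Qed.

Lemma coset_chains tau : 0 < tau ->
  exists eta, M <= eta /\ forall L L' x, cosets L -> cosets L' ->
    (exists y, ball G Sg x (3 * tau) y /\ L y) -> (exists y, ball G Sg x (3 * tau) y /\ L' y) ->
    exists k, INR k <= eta /\ chain cosets (tight_link G Sg tau eta x) k L L'.
Proof.
  intros htau; destruct (coset_links tau htau) as [Nc [R0 hlinks]].
  destruct (INR_unbounded (6 * tau)) as [n hn]; destruct (words_bounded n) as [W hW].
  set (bound := 3 * tau + INR W + 1 + INR ((W + 1) * Nc)).
  pose proof (Rmax_l M R0) as m1; pose proof (Rmax_r M R0) as m2.
  pose proof (Rmax_l (Rmax M R0) bound) as m3; pose proof (Rmax_r (Rmax M R0) bound) as hbound.
  set (eta := Rmax (Rmax M R0) bound) in *.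
  assert (hMR : M <= eta /\ R0 <= eta) by lra.
  clear m1 m2 m3.
  exists eta; split; [apply hMR |].
  intros L L' x [g [H [hg [hH ->]]]] [g' [H' [hg' [hH' ->]]]]
    [y [hy [h [hh ey]]]] [y' [hy' [h' [hh' ey']]]].
  rewrite (coset_rebase G H g h (proj1 (hHs H hH)) hh), <- ey.
  rewrite (coset_rebase G H' g' h' (proj1 (hHs H' hH')) hh'), <- ey'.
  assert (hGy : G1 y)
    by (rewrite ey; apply gen_union_subgroup; [exact hg | exact (gen_union_incl H h hH hh)]).
  assert (hGy' : G1 y')
    by (rewrite ey'; apply gen_union_subgroup; [exact hg' | exact (gen_union_incl H' h' hH' hh')]).
  assert (hlen : (len (gmul (ginv y) y') <= n)%nat).
  { apply Nat.lt_le_incl, INR_lt; fold (dist y y'); unfold ball in hy, hy'.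
    pose proof (dist_triangle G Sg hgen y x y'); rewrite (dist_sym G Sg hgen y x) in *; lra. }
  destruct (hW (gmul (ginv y) y')) as [w [hw [ew [hcost hlength]]]];
    [apply gen_union_subgroup; [apply gen_union_subgroup, hGy | exact hGy'] | exact hlen |].
  destruct (chain_along_word cosets (tight_link G Sg tau eta x) x Nc eta) with w y H H'
    as [k [hk hc]];
    [| exact hw | exact hGy | exact hH | exact hH' | |].
  - intros p A B hp hA hB hxp; apply hlinks; try apply hMR; assumption.
  - apply le_INR in hcost; unfold ball, bound in *; pose proof (pos_INR ((W + 1) * Nc)); lra.
  - rewrite ew, mulVKg in hc; exists k; split; [| exact hc].
    apply Rle_trans with (INR ((W + 1) * Nc)); [apply le_INR; nia |].
    unfold bound in *; pose proof (pos_INR W); lra.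
Qed.

Lemma cosets_cover H0 : Hs H0 -> finite_index G G1 ->
  exists c, forall x, exists L, cosets L /\ nbhd G Sg c L x.
Proof.
  intros hH0 [T hT].
  destruct (uniform_bound (fun t => In t T) (fun t n => (len t <= n)%nat) T) as [N hN];
    [auto | intros t _; exists (len t); apply le_n |].
  exists (INR (S N)); intros x; destruct (hT (ginv x)) as [t [k [ht [hk e]]]].
  destruct (proj1 (hHs H0 hH0)) as [h1 _].
  exists (coset G (ginv k) H0); split.
  - exists (ginv k), H0; repeat split; [apply gen_union_subgroup, hk | exact hH0].
  - exists (ginv k); split; [exists gone; split; [exact h1 | symmetry; apply gmul1r] |].
    unfold Defs.dist; rewrite e, mulgK; apply lt_INR.
    destruct (hN t ht) as [m [hm hl]]; lia.
Qed.

Lemma cosets_quasi_convex tau eta L :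
  0 < M -> M <= tau -> M <= eta -> cosets L -> quasi_convex G Sg tau eta L.
Proof.
  intros hM htau heta [g [H [_ [hH ->]]]].
  apply quasi_convex_coset.
  apply quasi_convex_mono with M M; [exact htau | exact hM | exact heta | apply hHs, hH].
Qed.

End TightNetwork.


Theorem proposition4p3 (G : Group) (S : list G) (Hs : (G -> Prop) -> Prop) :
  generates G S ->
  (exists H, Hs H) ->
  (exists M : R, tight_alg_network G S M Hs) ->
  exists tau eta : R, 0 <= tau /\ 0 <= eta /\
    tight_network G S tau eta (coset_family G (gen_union G Hs) Hs).
Proof.
  intros hgen [H0 hH0] [M [hHs [hfin hchain]]].
  assert (hM : 0 < M).
  { destruct (hHs H0 hH0) as [[h1 _] hq].
    exact (proj1 (quasi_convex_pos G S hgen M M H0 gone hq h1)). }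
  destruct (cosets_cover G S Hs M hHs H0 hH0 hfin) as [c hcover].
  pose proof (Rmax_l M c) as hMtau; pose proof (Rmax_r M c) as hctau.
  set (tau := Rmax M c) in *.
  destruct (coset_chains G S hgen Hs M hHs hchain tau ltac:(lra)) as [eta [hMeta hchains]].
  exists tau, eta; split; [lra | split; [lra |]].
  apply tight_network_intro; [| | exact hchains].
  - intros L hL; apply cosets_quasi_convex with Hs M; assumption.
  - intros x; destruct (hcover x) as [L [hL hx]].
    exists L; split; [exact hL | apply nbhd_mono with c; assumption].
Qed.
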